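(* For $k \ge 3$ let $L_k=\lim_{r\to\infty} R_r(k)^{1/r}$, and assume the Diagonal Conjecture (DC) holds: for every $r \ge 2$, all integers $3 \le s \le t$ and all integers $k_3,\dots,k_r \ge 2$, we have $R(s,t,k_3,\dots,k_r) \ge R(s-1,t+1,k_3,\dots,k_r)$. Then (a) either all $L_k$ ($k\ge 3$) are finite or all of them are infinite; and (b) if $L_3$ is finite, then $L_k < L_{k+1}$ for all $k \ge 3$.
   Context: $R(k_1,\dots,k_r)$ denotes the multicolor Ramsey number: the least $n$ such that every coloring of the edges of $K_n$ with $r$ colors contains, for some $i$, a complete subgraph $K_{k_i}$ all of whose edges have color $i$; it is symmetric in its arguments. $R_r(k)=R(k,\dots,k)$ with $r$ arguments equal to $k$. It is known (independently of DC) that each limit $L_k$ exists (possibly infinite) and $L_k \le L_{k+1}$. *)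

From HB Require Import structures.
From mathcomp Require Import all_boot all_order all_algebra.
From mathcomp Require Import all_classical all_reals all_analysis.
Set Implicit Arguments. Unset Strict Implicit. Unset Printing Implicit Defensive.
Import Order.TTheory GRing.Theory Num.Theory.

(* A coloring of the edges of K_n (vertices 'I_n) with r = size ks colors:
   the edge {x,y} with x < y receives color c (x, y).  [has_ramsey ks n] says:
   every such coloring has, for some color i, a set S of exactly ks_i vertices
   all of whose edges have color i. *)
Definition has_ramsey (ks : seq nat) (n : nat) : bool :=
  [forall c : {ffun 'I_n * 'I_n -> 'I_(size ks)},
     [exists i : 'I_(size ks), [exists S : {set 'I_n},
        (#|S| == nth 0 ks i) &&
        [forall x in S, forall y in S, (x < y)%N ==> (c (x, y) == i)]]]].

(* The multicolor Ramsey number R(k_1,...,k_r): the least n with has_ramsey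
   (it exists by Ramsey's theorem; the value 0 in the impossible other case). *)
Definition ramsey (ks : seq nat) : nat :=
  match pselect (exists n, has_ramsey ks n) with
  | left H => ex_minn H
  | right _ => 0%N
  end.

Definition ramsey_diag (r k : nat) : nat := ramsey (nseq r k).

Definition Lk (R : realType) (k : nat) : \bar R :=
  limn (fun r : nat => ((ramsey_diag r k)%:R `^ (r%:R^-1) : R)%:E).

(* Diagonal Conjecture: for all r >= 2 (r = size ks + 2), 3 <= s <= t,
   k_3..k_r >= 2:  R(s,t,k_3,..,k_r) >= R(s-1,t+1,k_3,..,k_r). *)
Definition DC : Prop :=
  forall (s t : nat) (ks : seq nat),
    (3 <= s)%N -> (s <= t)%N -> all (fun k => 2 <= k)%N ks ->
    (ramsey (s.-1 :: t.+1 :: ks) <= ramsey (s :: t :: ks))%N.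

From HB Require Import structures.
From mathcomp Require Import all_boot all_order all_algebra.
From mathcomp Require Import all_classical all_reals all_analysis.
From mathcomp Require Import zify ring lra.
Import Order.TTheory GRing.Theory Num.Theory.
Set Implicit Arguments. Unset Strict Implicit. Unset Printing Implicit Defensive.

(* Put s_k = sup_r ln (R_r(k) - 1) / r.  A lexicographic product of good
   colorings shows that r |-> R_r(k) - 1 is supermultiplicative, so by Fekete's
   lemma ln (R_r(k) - 1) / r, and hence ln R_r(k) / r, tends to s_k, and
   L_k = exp s_k (with L_k = +oo when s_k is infinite).  Under DC a color class
   asking for K_k can be traded for k - 2 classes asking for K_3, so
   R_r(k) <= R_(r(k-2))(3) and s_3 <= s_k <= (k - 2) s_3: this is (a).  Merging
   color classes with DC and a product coloring gives
   (R_q(k) - 1)^(k-1) 2^q <= R_((k-1)q)(k+1) - 1, so that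
   s_(k+1) >= s_k + ln 2 / (k - 1): this is (b). *)

(* Colorings are total functions on nat, of which only the values at x < y < n
   matter; this keeps restrictions and products of colorings first-order. *)
Definition coloring n r (c : nat -> nat -> nat) :=
  forall x y, (x < n)%N -> (y < n)%N -> (c x y < r)%N.

Definition monochromatic n (c : nat -> nat -> nat) i (S : {set 'I_n}) :=
  forall x y : 'I_n, x \in S -> y \in S -> (x < y)%N -> c x y = i.

Definition arrows (ks : seq nat) n :=
  forall c, coloring n (size ks) c -> exists i (S : {set 'I_n}),
    [/\ (i < size ks)%N, #|S| = nth 0 ks i & monochromatic c i S].

Lemma arrows_has_ramsey ks n : arrows ks n <-> has_ramsey ks n.
Proof.
split=> [ksn | /forallP ksn c c_col].
- apply/forallP => cf.
  pose c x y := if (insub x : option 'I_n) is Some x' then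
                  if (insub y : option 'I_n) is Some y' then val (cf (x', y')) else 0
                else 0%N.
  have c_col : coloring n (size ks) c.
    move=> x y xn yn.
    rewrite /c; case: insubP => [x' _ _|]; last by rewrite xn.
    by case: insubP => [y' _ _|]; [exact: ltn_ord | rewrite yn].
  have [i [S [lt_i cardS monoS]]] := ksn c c_col.
  apply/existsP; exists (Ordinal lt_i); apply/existsP; exists S.
  rewrite cardS eqxx; apply/'forall_implyP => x xS; apply/'forall_implyP => y yS.
  apply/implyP => lt_xy; apply/eqP/val_inj.
  by have := monoS x y xS yS lt_xy; rewrite /c !valK.
- pose cf := [ffun p : 'I_n * 'I_n =>
                Ordinal (c_col p.1 p.2 (ltn_ord _) (ltn_ord _)) : 'I_(size ks)].
  have /existsP[i /existsP[S /andP[/eqP cardS /forallP monoS]]] := ksn cf.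
  exists i, S; split=> // x y xS yS lt_xy.
  have /'forall_implyP/(_ y yS)/implyP/(_ lt_xy)/eqP := implyP (monoS x) xS.
  by rewrite ffunE => /(congr1 val).
Qed.

Section InducedColoring.
Variables (m n : nat) (h : 'I_m -> 'I_n) (c : nat -> nat -> nat).

Definition induced_coloring x y :=
  if (insub x : option 'I_m) is Some x' then
    if (insub y : option 'I_m) is Some y' then c (h x') (h y') else 0
  else 0%N.

Lemma induced_coloringE (x y : 'I_m) : induced_coloring x y = c (h x) (h y).
Proof. by rewrite /induced_coloring !valK. Qed.

Lemma coloring_induced r : coloring n r c -> coloring m r induced_coloring.
Proof.
move=> c_col x y xm ym.
by rewrite (_ : x = Ordinal xm) // (_ : y = Ordinal ym) // induced_coloringE c_col.
Qed.

Hypothesis h_incr : {homo h : x y / (x < y)%N}.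

Lemma card_imset_incr (S : {set 'I_m}) : #|h @: S| = #|S|.
Proof.
apply: card_imset => x y hxy; apply: val_inj.
by case: (ltngtP x y) => // /h_incr; rewrite hxy ltnn.
Qed.

Lemma monochromatic_imset i (S : {set 'I_m}) :
  monochromatic induced_coloring i S -> monochromatic c i (h @: S).
Proof.
move=> monoS _ _ /imsetP[x xS ->] /imsetP[y yS ->] lt_hxy.
rewrite -induced_coloringE; apply: monoS => //.
by case: (ltngtP x y) lt_hxy => // [/h_incr lt_hyx | /val_inj ->]; lia.
Qed.

End InducedColoring.

Lemma sorted_enum_ord n (A : {set 'I_n}) : sorted (fun x y : 'I_n => (x < y)%N) (enum A).
Proof.
rewrite -deprecated_filter_index_enum; apply: sorted_filter; first exact: ltn_trans.
rewrite /index_enum; case: index_enum_key => /=; rewrite -enumT.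
rewrite (_ : (fun x y : 'I_n => (x < y)%N) = relpre val ltn) //.
by rewrite -sorted_map val_enum_ord; exact: iota_ltn_sorted.
Qed.

Lemma arrows_in_set ks m n (A : {set 'I_n}) c :
  arrows ks m -> (m <= #|A|)%N -> coloring n (size ks) c ->
  exists i (S : {set 'I_n}),
    [/\ (i < size ks)%N, S \subset A, #|S| = nth 0 ks i & monochromatic c i S].
Proof.
move=> ks_m m_A c_col.
have le_mn : (m <= n)%N by rewrite (leq_trans m_A) // (leq_trans (max_card _)) ?card_ord.
pose h (j : 'I_m) := nth (widen_ord le_mn j) (enum A) j.
have lt_A (j : 'I_m) : (j < size (enum A))%N by rewrite -cardE (leq_trans _ m_A).
have h_incr : {homo h : x y / (x < y)%N}.
  move=> x y lt_xy; rewrite /h (set_nth_default (widen_ord le_mn y)) //.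
  apply: (sorted_ltn_nth (fun a b c => @ltn_trans (val a) (val b) (val c)) _
           (sorted_enum_ord A)) => //; exact: lt_A.
have hA j : h j \in A by rewrite -mem_enum mem_nth.
have [i [S [lt_i cardS monoS]]] := ks_m _ (coloring_induced h c_col).
exists i, (h @: S); split=> //; first by apply/fintype.subsetP => _ /imsetP[x _ ->].
  by rewrite card_imset_incr.
exact: monochromatic_imset.
Qed.

Lemma arrows_widen ks m n : arrows ks m -> (m <= n)%N -> arrows ks n.
Proof.
move=> ks_m le_mn c c_col.
have [|i [S [lt_i _ cardS monoS]]] := arrows_in_set (A := [set: 'I_n]) ks_m _ c_col.
  by rewrite cardsT card_ord.
by exists i, S.
Qed.

Lemma pigeonhole (T : finType) m (D : {pred T}) (col : T -> 'I_m) (N : 'I_m -> nat) :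
  (\sum_(i < m) N i < #|D| + m)%N -> exists i, (N i <= #|[set x in D | col x == i]|)%N.
Proof.
move=> ltN; apply/existsP; apply: contraLR ltN => /existsPn small; rewrite -leqNgt.
have -> : #|D| = (\sum_(i < m) #|[set x in D | col x == i]|)%N.
  rewrite -sum1_card (partition_big col xpredT) //=; apply: eq_bigr => i _.
  by rewrite -sum1_card; apply: eq_bigl => x; rewrite inE.
have : (\sum_(i < m) (#|[set x in D | col x == i]| + 1) <= \sum_(i < m) N i)%N.
  by apply: leq_sum => i _; rewrite addn1 ltnNge small.
by rewrite big_split /= sum_nat_const card_ord muln1.
Qed.

Lemma arrows_small ks i : (i < size ks)%N -> (nth 0 ks i <= 1)%N -> arrows ks 1.
Proof.
move=> lt_i le1 c _; exists i.
exists [set x : 'I_1 | nth 0 ks i == 1%N]; split=> //.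
  by case: (nth 0 ks i) le1 => [|[|]] // _; rewrite cardsE ?card0 ?card_ord.
by move=> x y _ _; rewrite !ord1.
Qed.

Definition decr_nth (ks : seq nat) i := set_nth 0 ks i (nth 0 ks i).-1.

Lemma size_decr_nth ks i : (i < size ks)%N -> size (decr_nth ks i) = size ks.
Proof. by move=> lt_i; rewrite size_set_nth; apply/maxn_idPr. Qed.

Lemma sumn_decr_nth ks i : (i < size ks)%N -> (0 < nth 0 ks i)%N ->
  (sumn (decr_nth ks i) < sumn ks)%N.
Proof.
rewrite /decr_nth; elim: ks i => [|k ks IH] [|i] //= lt_i gt0; first lia.
by rewrite ltn_add2l; apply: IH.
Qed.

Lemma arrows_decr ks (N : 'I_(size ks) -> nat) : all (fun k => 2 <= k)%N ks ->
  (forall i : 'I_(size ks), arrows (decr_nth ks i) (N i)) -> arrows ks (\sum_i N i).+1.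
Proof.
move=> ks_ge2 ksN c c_col.
have [ks0|ks_gt0] := posnP (size ks).
  by have := c_col 0 0 isT isT; rewrite [X in (_ < X)%N]ks0.
set n := (\sum_i N i).+1 in c c_col *.
pose col (y : 'I_n) : 'I_(size ks) := Ordinal (c_col 0 y isT (ltn_ord y)).
have [|i Ni] := @pigeonhole _ _ [set~ ord0 : 'I_n] col N.
  by rewrite cardsC1 card_ord /= -ltn_psubLR ?subnn.
have c_col' : coloring n (size (decr_nth ks i)) c by rewrite size_decr_nth.
have [j [S [lt_j SA cardS monoS]]] := arrows_in_set (ksN i) Ni c_col'.
rewrite size_decr_nth // in lt_j; rewrite nth_set_nth /= in cardS.
have [eq_ji|ne_ji] := eqVneq j i; last by exists j, S; rewrite cardS (negPf ne_ji).
have ki_ge2 : (2 <= nth 0 ks i)%N by apply: (allP ks_ge2); rewrite mem_nth.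
have S0 : ord0 \notin S by apply: contraTN isT => /(fintype.subsetP SA); rewrite !inE eqxx.
exists i, (ord0 |: S); split=> //; first by rewrite cardsU1 S0 cardS eq_ji eqxx; lia.
move=> x y /setU1P[-> | xS] /setU1P[-> | yS] lt_xy //; last by rewrite -eq_ji monoS.
by have := fintype.subsetP SA y yS; rewrite !inE => /andP[_ /eqP/(congr1 val)].
Qed.

Lemma arrows_exists ks : exists n, arrows ks n.
Proof.
have [s] := ubnP (sumn ks); elim: s ks => // s IH ks /ltnSE le_s.
have [/hasP[k k_ks le1] | /hasPn gt1] := boolP (has (fun k => k <= 1)%N ks).
  by exists 1%N; apply: (@arrows_small _ (index k ks)); rewrite ?index_mem ?nth_index.
have ks_ge2 : all (fun k => 2 <= k)%N ks by apply/allP => k /gt1; rewrite -ltnNge.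
have /boolp.choice[N ksN] : forall i : 'I_(size ks), exists n, arrows (decr_nth ks i) n.
  move=> i; apply: IH; apply: leq_trans le_s; apply: sumn_decr_nth => //.
  by rewrite (leq_trans _ (allP ks_ge2 _ (mem_nth 0 (ltn_ord i)))).
by exists (\sum_i N i).+1; apply: arrows_decr.
Qed.

Lemma arrows_ramsey ks : arrows ks (ramsey ks).
Proof.
rewrite /ramsey; case: pselect => [ex | no_ex].
  by case: ex_minnP => n /arrows_has_ramsey.
by have [n /arrows_has_ramsey ksn] := arrows_exists ks; case: no_ex; exists n.
Qed.

Lemma ramsey_min ks n : arrows ks n -> (ramsey ks <= n)%N.
Proof.
move=> /arrows_has_ramsey ksn; rewrite /ramsey; case: pselect => [ex | []]; last by exists n.
by case: ex_minnP => m _; apply.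
Qed.

Lemma monochromatic_subset n c i (S T : {set 'I_n}) :
  T \subset S -> monochromatic c i S -> monochromatic c i T.
Proof. by move=> /fintype.subsetP TS monoS x y xT yT; apply: monoS; apply: TS. Qed.

Lemma monochromatic_unused n (c : nat -> nat -> nat) i (S : {set 'I_n}) :
  (forall x y : 'I_n, (x < y)%N -> c x y != i) -> monochromatic c i S -> (#|S| <= 1)%N.
Proof.
move=> unused monoS; rewrite leqNgt; apply/negP => /card_gt1P[x [y [xS yS ne_xy]]].
wlog lt_xy : x y xS yS ne_xy / (x < y)%N.
  move=> wlog; case: (ltngtP x y) => [|lt_yx|/val_inj eq_xy]; first exact: wlog.
    by apply: (wlog y x); rewrite // eq_sym.
  by rewrite eq_xy eqxx in ne_xy.
by have := unused x y lt_xy; rewrite (monoS x y xS yS lt_xy) eqxx.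
Qed.

Lemma exists_subset_card (T : finType) (S : {set T}) k : (k <= #|S|)%N ->
  exists2 S' : {set T}, S' \subset S & #|S'| = k.
Proof.
move=> le_k; exists [set x in take k (enum S)].
  by apply/fintype.subsetP => x; rewrite inE => /mem_take; rewrite mem_enum.
rewrite cardsE (card_uniqP _) ?take_uniq ?enum_uniq // size_take -cardE.
by case: ltngtP le_k; lia.
Qed.

Definition good_coloring ks n c := coloring n (size ks) c /\
  forall i (S : {set 'I_n}), (i < size ks)%N -> monochromatic c i S -> (#|S| < nth 0 ks i)%N.

Lemma good_coloringP ks n : ~ arrows ks n <-> exists c, good_coloring ks n c.
Proof.
split=> [/boolp.existsNP[c /boolp.not_implyP[c_col no_mono]] | [c [c_col small]] ks_n].
  exists c; split=> // i S lt_i monoS; rewrite ltnNge.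
  apply/negP => /exists_subset_card[T TS cardT].
  by apply: no_mono; exists i, T; split=> //; apply: monochromatic_subset monoS.
have [i [S [lt_i cardS monoS]]] := ks_n c c_col.
by have := small i S lt_i monoS; rewrite cardS ltnn.
Qed.

Lemma leq_pred_ramsey ks n c : good_coloring ks n c -> (n <= (ramsey ks).-1)%N.
Proof.
move=> good; rewrite -ltnS (leq_trans _ (leqSpred _)) // ltnNge; apply/negP => le_R.
by move: (arrows_widen (@arrows_ramsey ks) le_R); apply/good_coloringP; exists c.
Qed.

Lemma good_coloring_ramsey ks : (0 < ramsey ks)%N ->
  exists c, good_coloring ks (ramsey ks).-1 c.
Proof.
move=> R_gt0; apply/good_coloringP => /ramsey_min.
by rewrite -ltnS prednK // ltnn.
Qed.

Lemma good_coloring_gt0 ks n c i : good_coloring ks n c -> (i < size ks)%N ->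
  (0 < nth 0 ks i)%N.
Proof.
move=> [_ small] lt_i; have := small i finset.set0 lt_i.
by rewrite cards0; apply=> x y; rewrite inE.
Qed.

Lemma arrows_transfer ks ks' (g : nat -> nat) n :
  {in gtn (size ks) &, injective g} ->
  (forall i, (i < size ks)%N -> (g i < size ks')%N) ->
  (forall i, (i < size ks)%N -> (nth 0 ks i <= nth 0 ks' (g i))%N) ->
  (forall j, (j < size ks')%N -> (forall i, (i < size ks)%N -> g i != j) ->
     (2 <= nth 0 ks' j)%N) ->
  arrows ks' n -> arrows ks n.
Proof.
move=> g_inj g_lt g_le g_new ks'_n c c_col.
have [|j [S [lt_j cardS monoS]]] := ks'_n (fun x y => g (c x y)).
  by move=> x y xn yn; apply/g_lt/c_col.
have c_colI (x y : 'I_n) : (c x y < size ks)%N by apply: c_col.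
have [i lt_i gij] : exists2 i, (i < size ks)%N & g i = j.
  apply: boolp.contrapT => no_i.
  have : (#|S| <= 1)%N.
    apply: monochromatic_unused monoS => x y _; apply/eqP => gc.
    by apply: no_i; exists (c x y).
  rewrite cardS leqNgt g_new // => i lt_i; apply/eqP => gij.
  by apply: no_i; exists i.
have monoS_i : monochromatic c i S.
  by move=> x y xS yS lt_xy; apply: g_inj; rewrite ?inE // gij; apply: monoS.
have [|T TS cardT] := @exists_subset_card _ S (nth 0 ks i).
  by rewrite cardS -gij g_le.
by exists i, T; split=> //; apply: monochromatic_subset monoS_i.
Qed.

Lemma arrows_perm s t n : perm_eq s t -> arrows t n -> arrows s n.
Proof.
move=> /(perm_iotaP 0)[I perm_I ->].
have uniq_I : uniq I by rewrite (perm_uniq perm_I) iota_uniq.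
have I_lt j : (j \in I) = (j < size t)%N by rewrite (perm_mem perm_I) mem_iota.
apply: (arrows_transfer (g := nth 0 I)); rewrite size_map.
- by move=> i j lt_i lt_j /eqP; rewrite nth_uniq // => /eqP.
- by move=> i lt_i; rewrite -I_lt mem_nth.
- by move=> i lt_i; rewrite (nth_map 0).
- move=> j lt_j no_j; have jI : j \in I by rewrite I_lt.
  by have := no_j (index j I); rewrite index_mem nth_index // eqxx => /(_ jI).
Qed.

Lemma ramsey_perm s t : perm_eq s t -> ramsey s = ramsey t.
Proof.
move=> st; apply/eqP; rewrite eqn_leq; apply/andP; split; apply: ramsey_min.
  exact: arrows_perm st (@arrows_ramsey t).
by apply: arrows_perm (@arrows_ramsey s); rewrite perm_sym.
Qed.

Lemma ramsey_cons2 ks : (ramsey ks <= ramsey (2 :: ks))%N.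
Proof.
apply/ramsey_min/(arrows_transfer (g := S)); last exact: arrows_ramsey.
- by move=> i j _ _ [].
- by [].
- by [].
- by move=> [|j] //= lt_j /(_ j lt_j); rewrite eqxx.
Qed.

Lemma ramsey_nseq_leq r a b : (a <= b)%N ->
  (ramsey (nseq r a) <= ramsey (nseq r b))%N.
Proof.
move=> le_ab; apply/ramsey_min/(arrows_transfer (g := id)); last exact: arrows_ramsey.
- by [].
- by move=> i; rewrite !size_nseq.
- by move=> i; rewrite size_nseq => lt_i; rewrite !nth_nseq lt_i.
- by move=> j lt_j /(_ j); rewrite !size_nseq in lt_j *; rewrite lt_j eqxx => /(_ isT).
Qed.

(* A vertex x of K_(A * B) is the pair (x / B, x mod B): edges inside a block
   are colored by [cb], edges between blocks by [ca]. *)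
Section LexProduct.
Variables (A B : nat) (B_gt0 : (0 < B)%N).

Definition lex_coloring (ca cb : nat -> nat -> nat) x y :=
  if x %/ B == y %/ B then cb (x %% B) (y %% B) else ca (x %/ B) (y %/ B).

Lemma coloring_lex r ca cb :
  coloring A r ca -> coloring B r cb -> coloring (A * B) r (lex_coloring ca cb).
Proof.
move=> ca_col cb_col x y xAB yAB; rewrite /lex_coloring.
by case: eqP => _; [apply: cb_col; rewrite ltn_pmod | apply: ca_col; rewrite ltn_divLR].
Qed.

Definition block (x : 'I_(A * B)) : 'I_A :=
  Ordinal (etrans (ltn_divLR _ _ B_gt0) (ltn_ord x)).
Definition offset (x : 'I_(A * B)) : 'I_B := Ordinal (ltn_pmod x B_gt0).
Definition fiber (S : {set 'I_(A * B)}) t := [set x in S | block x == t].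

Lemma block_offset_inj : injective (fun x => (block x, offset x)).
Proof.
move=> x y [= eq_div eq_mod]; apply: val_inj.
by rewrite /= (divn_eq x B) (divn_eq y B) eq_div eq_mod.
Qed.

Lemma card_le_blocks (S : {set 'I_(A * B)}) q :
  (forall t, (#|fiber S t| <= q)%N) -> (#|S| <= #|block @: S| * q)%N.
Proof.
move=> small; rewrite -sum1_card (partition_big block (mem (block @: S))) /=; last first.
  by move=> x xS; apply: imset_f.
rewrite -sum_nat_const; apply: leq_sum => t _; apply: leq_trans (small t).
by rewrite sum1_card; apply: eq_leq; apply: eq_card => x; rewrite !inE.
Qed.

Lemma card_offset_fiber (S : {set 'I_(A * B)}) t : #|offset @: fiber S t| = #|fiber S t|.
Proof.
apply: card_in_imset => x y; rewrite !inE => /andP[_ /eqP bx] /andP[_ /eqP by_] eq_o.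
by apply: block_offset_inj; rewrite /= bx by_ eq_o.
Qed.

Lemma monochromatic_lex_block ca cb i S :
  monochromatic (lex_coloring ca cb) i S -> monochromatic ca i (block @: S).
Proof.
move=> monoS _ _ /imsetP[x xS ->] /imsetP[y yS ->] /= lt_xy.
have lt_xy' : (x < y)%N.
  by rewrite ltnNge; apply: contraL lt_xy => /(leq_div2r B); rewrite -leqNgt.
by have := monoS x y xS yS lt_xy'; rewrite /lex_coloring ltn_eqF.
Qed.

Lemma monochromatic_lex_fiber ca cb i S t :
  monochromatic (lex_coloring ca cb) i S -> monochromatic cb i (offset @: fiber S t).
Proof.
move=> monoS _ _ /imsetP[x + ->] /imsetP[y + ->] /=.
rewrite !inE => /andP[xS /eqP bx] /andP[yS /eqP by_] lt_xy.
have eq_div : x %/ B = y %/ B by have := congr1 val (etrans bx (esym by_)).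
have lt_xy' : (x < y)%N by rewrite (divn_eq x B) (divn_eq y B) eq_div ltn_add2l.
by have := monoS x y xS yS lt_xy'; rewrite /lex_coloring eq_div eqxx.
Qed.

Lemma good_coloring_lex_cat a b ca cb :
  good_coloring a A ca -> good_coloring b B cb ->
  good_coloring (a ++ b) (A * B) (lex_coloring ca (fun x y => size a + cb x y)).
Proof.
move=> [ca_col ca_good] [cb_col cb_good].
split.
  apply: coloring_lex => x y xA yA; rewrite size_cat.
    by rewrite ltn_addr ?ca_col.
  by rewrite ltn_add2l cb_col.
move=> i S; rewrite size_cat nth_cat => lt_i monoS.
have mono_block := monochromatic_lex_block monoS.
have mono_fiber t := monochromatic_lex_fiber (t := t) monoS.
have [i_a | a_i] := ltnP i (size a).
  have fiber_le1 t : (#|fiber S t| <= 1)%N.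
    rewrite -card_offset_fiber; apply: monochromatic_unused (mono_fiber t) => x y _.
    by apply: contraTneq i_a => <-; rewrite -leqNgt leq_addr.
  by apply: leq_ltn_trans (card_le_blocks fiber_le1) _; rewrite muln1 ca_good.
set j := (i - size a)%N.
have lt_j : (j < size b)%N by rewrite ltn_subLR.
have b_gt0 := good_coloring_gt0 (conj cb_col cb_good) lt_j.
have block_le1 : (#|block @: S| <= 1)%N.
  apply: monochromatic_unused mono_block => x y _.
  by apply: contraTneq a_i => <-; rewrite -ltnNge ca_col.
have fiber_lt t : (#|fiber S t| <= (nth 0 b j).-1)%N.
  rewrite -card_offset_fiber -ltnS prednK // cb_good // => x y xS yS lt_xy.
  by rewrite /j -(mono_fiber t x y xS yS lt_xy) addKn.
by apply: leq_ltn_trans (card_le_blocks fiber_lt) _; nia.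
Qed.

Lemma good_coloring_lex_nseq q u v ca cb :
  good_coloring (nseq q u) A ca -> good_coloring (nseq q v) B cb ->
  good_coloring (nseq q (u.-1 * v.-1).+1) (A * B) (lex_coloring ca cb).
Proof.
rewrite /good_coloring !size_nseq => -[ca_col ca_good] [cb_col cb_good].
split=> [|i S lt_i monoS]; first exact: coloring_lex.
have block_lt : (#|block @: S| <= u.-1)%N.
  have := ca_good i _ lt_i (monochromatic_lex_block monoS).
  by rewrite nth_nseq lt_i => lt_u; rewrite -ltnS (leq_trans lt_u) ?leqSpred.
have fiber_lt t : (#|fiber S t| <= v.-1)%N.
  have := cb_good i _ lt_i (monochromatic_lex_fiber (t := t) monoS).
  by rewrite nth_nseq lt_i card_offset_fiber => lt_v; rewrite -ltnS (leq_trans lt_v) ?leqSpred.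
rewrite nth_nseq lt_i ltnS; apply: leq_trans (card_le_blocks fiber_lt) _.
exact: leq_mul.
Qed.

End LexProduct.

Lemma ramsey_cat a b : ((ramsey a).-1 * (ramsey b).-1 <= (ramsey (a ++ b)).-1)%N.
Proof.
have [->|/good_coloring_ramsey[ca ca_good]] := posnP (ramsey a); first by [].
have [B0|B_gt0] := posnP (ramsey b).-1; first by rewrite B0 muln0.
have /good_coloring_ramsey[cb cb_good] : (0 < ramsey b)%N by case: (ramsey b) B_gt0.
exact: leq_pred_ramsey (good_coloring_lex_cat B_gt0 ca_good cb_good).
Qed.

Lemma ramsey_nseq_mul q u v :
  ((ramsey (nseq q u)).-1 * (ramsey (nseq q v)).-1 <=
   (ramsey (nseq q (u.-1 * v.-1).+1)).-1)%N.
Proof.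
have [->|/good_coloring_ramsey[ca ca_good]] := posnP (ramsey (nseq q u)); first by [].
have [B0|B_gt0] := posnP (ramsey (nseq q v)).-1; first by rewrite B0 muln0.
have /good_coloring_ramsey[cb cb_good] : (0 < ramsey (nseq q v))%N.
  by case: (ramsey _) B_gt0.
exact: leq_pred_ramsey (good_coloring_lex_nseq B_gt0 ca_good cb_good).
Qed.

Definition ramsey_crit r k := (ramsey_diag r k).-1.

Lemma ramsey_crit_mul a b k :
  (ramsey_crit a k * ramsey_crit b k <= ramsey_crit (a + b) k)%N.
Proof. by rewrite /ramsey_crit /ramsey_diag nseqD; apply: ramsey_cat. Qed.

Lemma ramsey_crit_expn m q k : (0 < q)%N ->
  (ramsey_crit m k ^ q <= ramsey_crit (q * m) k)%N.
Proof.
case: q => // q _; elim: q => [|q IH]; first by rewrite expn1 mul1n.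
by rewrite expnS mulSn; apply: leq_trans (ramsey_crit_mul _ _ _); rewrite leq_mul.
Qed.

Lemma ramsey_crit1 k : (3 <= k)%N -> (2 <= ramsey_crit 1 k)%N.
Proof.
move=> k_ge3; apply: (@leq_pred_ramsey _ _ (fun _ _ => 0%N)).
split=> [// | [|//] S _ _]; rewrite /= (leq_ltn_trans (max_card S)) ?card_ord //.
Qed.

Lemma ramsey_crit_ge_exp2 r k : (3 <= k)%N -> (0 < r)%N -> (2 ^ r <= ramsey_crit r k)%N.
Proof.
move=> k_ge3; case: r => // r _; elim: r => [|r IH]; first exact: ramsey_crit1.
rewrite expnSr -[r.+2]addn1; apply: leq_trans (ramsey_crit_mul _ _ _).
by rewrite leq_mul ?ramsey_crit1.
Qed.

Lemma ramsey_crit_gt0 r k : (3 <= k)%N -> (0 < r)%N -> (0 < ramsey_crit r k)%N.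
Proof.
by move=> k_ge3 r_gt0; rewrite (leq_trans _ (ramsey_crit_ge_exp2 k_ge3 r_gt0)) ?expn_gt0.
Qed.

Lemma ramsey_crit_homo r k l : (k <= l)%N -> (ramsey_crit r k <= ramsey_crit r l)%N.
Proof. by move=> le_kl; rewrite /ramsey_crit -!subn1 leq_sub2r ?ramsey_nseq_leq. Qed.

Ltac perm_by_count :=
  apply/permP; let p := fresh "p" in move=> p;
  rewrite /= ?count_cat ?count_nseq /= ?count_cat ?count_nseq /=;
  repeat match goal with |- context [p ?x] => case: (p x) => /= end;
  rewrite ?mul1n ?mul0n ?add0n ?addn0; lia.

Section DiagonalConjecture.
Hypothesis dc : DC.

Lemma DC_split_color d X : all (leq 2) X ->
  (ramsey ((d + 3) :: X) <= ramsey (nseq (d + 1) 3 ++ X))%N.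
Proof.
elim: d X => [//|d IH] X X_ge2.
apply: leq_trans (ramsey_cons2 _) _.
rewrite addSn; apply: leq_trans (@dc 3 (d + 3) X isT (leq_addl _ _) X_ge2) _.
rewrite (@ramsey_perm _ ((d + 3) :: 3 :: X)); last by perm_by_count.
apply: leq_trans (IH (3 :: X) X_ge2) _.
by rewrite (@ramsey_perm _ (nseq (d.+1 + 1) 3 ++ X)) //; perm_by_count.
Qed.

Lemma DC_split_nseq r k X : (3 <= k)%N -> all (leq 2) X ->
  (ramsey (nseq r k ++ X) <= ramsey (X ++ nseq (r * (k - 2)) 3))%N.
Proof.
move=> k_ge3; elim: r X => [|r IH] X X_ge2.
  by rewrite (@ramsey_perm (X ++ _) X) ?cats0.
have X'_ge2 : all (leq 2) (nseq r k ++ X) by rewrite all_cat all_nseq X_ge2 (ltnW k_ge3) orbT.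
rewrite /= -{1}(subnK k_ge3); apply: leq_trans (DC_split_color _ X'_ge2) _.
rewrite (@ramsey_perm _ (nseq r k ++ (X ++ nseq (k - 3 + 1) 3))); last by perm_by_count.
apply: leq_trans (IH _ _) _; first by rewrite all_cat X_ge2 all_nseq orbT.
rewrite (@ramsey_perm _ (X ++ nseq (r.+1 * (k - 2)) 3)) //.
by apply/permP => p; rewrite !count_cat !count_nseq mulSn; case: (p 3) => /=; lia.
Qed.

Lemma DC_shift_block j t k X : (2 <= k)%N -> (k < t)%N -> all (leq 2) X ->
  (ramsey (nseq j k ++ (t + j) :: X) <= ramsey (nseq j k.+1 ++ t :: X))%N.
Proof.
move=> k_ge2; elim: j t X => [|j IH] t X lt_kt X_ge2; first by rewrite addn0.
rewrite (@ramsey_perm (nseq j.+1 k.+1 ++ t :: X) (k.+1 :: t :: (nseq j k.+1 ++ X)));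
  last by perm_by_count.
have Z_ge2 : all (leq 2) (nseq j k.+1 ++ X) by rewrite all_cat all_nseq X_ge2 ltnW ?orbT.
apply: leq_trans (@dc k.+1 t _ (leq_ltn_trans k_ge2 (ltnSn _)) lt_kt Z_ge2).
rewrite (@ramsey_perm (k :: t.+1 :: _) (nseq j k.+1 ++ t.+1 :: (X ++ [:: k])));
  last by perm_by_count.
have X'_ge2 : all (leq 2) (X ++ [:: k]) by rewrite all_cat X_ge2 /= k_ge2.
apply: leq_trans (IH t.+1 _ (ltn_trans lt_kt (ltnSn _)) X'_ge2).
rewrite (@ramsey_perm _ (nseq j k ++ (t.+1 + j) :: X ++ [:: k])) //.
apply/permP => p; rewrite /= ?count_cat /= ?count_cat ?count_nseq /= ?addn0 ?addSnnS.
by case: (p k) => /=; lia.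
Qed.

Lemma DC_merge_blocks q k Y : (3 <= k)%N -> all (leq 2) Y ->
  (ramsey (Y ++ nseq ((k - 2) * q) k ++ nseq q (2 * k - 1)) <=
   ramsey (nseq ((k - 1) * q) k.+1 ++ Y))%N.
Proof.
move=> k_ge3; elim: q Y => [|q IH] Y Y_ge2; first by rewrite !muln0 /= cats0.
set Z := nseq ((k - 1) * q) k.+1 ++ Y.
rewrite (@ramsey_perm (nseq ((k - 1) * q.+1) k.+1 ++ Y) (nseq (k - 2) k.+1 ++ k.+1 :: Z)).
  have Z_ge2 : all (leq 2) Z.
    by rewrite all_cat Y_ge2 all_nseq andbT; apply/orP; right; lia.
  apply: leq_trans (DC_shift_block (k - 2) (ltnW k_ge3) (ltnSn k) Z_ge2).
  have -> : (k.+1 + (k - 2) = 2 * k - 1)%N by lia.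
  set Y' := Y ++ nseq (k - 2) k ++ [:: 2 * k - 1].
  rewrite (@ramsey_perm (nseq (k - 2) k ++ (2 * k - 1) :: Z) (nseq ((k - 1) * q) k.+1 ++ Y'));
    last by rewrite /Z /Y'; perm_by_count.
  have Y'_ge2 : all (leq 2) Y'.
    by rewrite !all_cat Y_ge2 all_nseq /= ltnW ?orbT //=; apply/andP; split=> //; lia.
  apply: leq_trans (IH _ Y'_ge2).
  rewrite (@ramsey_perm _ (Y' ++ nseq ((k - 2) * q) k ++ nseq q (2 * k - 1))) //.
  apply/permP => p; rewrite /Y' !count_cat !count_nseq /= ?count_cat ?count_nseq !mulnS.
  by case: (p k) => /=; case: (p (2 * k - 1)) => /=; lia.
apply/permP => p; rewrite /Z /= !count_cat !count_nseq /= !count_cat !count_nseq.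
by rewrite mulnS; case: (p k.+1) => /=; lia.
Qed.

Lemma ramsey_crit_le3 r k : (3 <= k)%N ->
  (ramsey_crit r k <= ramsey_crit (r * (k - 2)) 3)%N.
Proof.
move=> k_ge3; have := DC_split_nseq r k_ge3 (isT : all (leq 2) [::]).
by rewrite cats0 /ramsey_crit -!subn1 => /leq_sub2r->.
Qed.

Lemma ramsey_crit_succ q k : (3 <= k)%N -> (0 < q)%N ->
  (ramsey_crit q k ^ (k - 1) * 2 ^ q <= ramsey_crit ((k - 1) * q) k.+1)%N.
Proof.
move=> k_ge3 q_gt0.
have merge : (ramsey_crit ((k - 2) * q) k * ramsey_crit q (2 * k - 1) <=
              ramsey_crit ((k - 1) * q) k.+1)%N.
  apply: leq_trans (ramsey_cat _ _) _.
  rewrite /ramsey_crit /ramsey_diag -!subn1 leq_sub2r //.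
  by have := DC_merge_blocks q k_ge3 (isT : all (leq 2) [::]); rewrite cats0.
have prod : (ramsey_crit q k * ramsey_crit q 3 <= ramsey_crit q (2 * k - 1))%N.
  by have := ramsey_nseq_mul q k 3; rewrite (_ : (k.-1 * 2).+1 = 2 * k - 1)%N //; lia.
have pow : (ramsey_crit q k ^ (k - 2) <= ramsey_crit ((k - 2) * q) k)%N.
  by apply: ramsey_crit_expn; rewrite subn_gt0.
have km1 : (k - 1 = (k - 2).+1)%N by lia.
rewrite {1}km1 expnS -mulnA mulnCA.
apply: leq_trans merge; rewrite leq_mul //; apply: leq_trans prod.
by rewrite leq_mul2l ramsey_crit_ge_exp2 ?orbT.
Qed.

End DiagonalConjecture.

Import numFieldNormedType.Exports.
Local Open Scope classical_set_scope.
Local Open Scope ring_scope.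

Section Fekete.
Variables (R : realType) (f : nat -> R).
Hypothesis f_ge0 : forall n, 0 <= f n.
Hypothesis f_superadd : forall m n, f m + f n <= f (m + n).

Let ratio n := f n / n%:R.

Lemma superadd_homo : {homo f : m n / (m <= n)%N >-> m <= n}.
Proof.
move=> m n /subnK <-; rewrite addnC; apply: le_trans (f_superadd _ _).
by rewrite lerDl.
Qed.

Lemma superadd_mulrn m q : f m *+ q <= f (q * m).
Proof.
elim: q => [|q IH]; first by rewrite mulr0n f_ge0.
by rewrite mulrSr mulSnr; apply: le_trans (f_superadd _ _); rewrite lerD2r.
Qed.

Lemma superadd_ratio_lb m n : (0 < m <= n)%N -> ratio m - f m / n%:R <= ratio n.
Proof.
move=> /andP[m_gt0 le_mn]; have n_gt0 := leq_trans m_gt0 le_mn.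
have m_pos : 0 < m%:R :> R by rewrite ltr0n.
have n_pos : 0 < n%:R :> R by rewrite ltr0n.
set q := (n %/ m)%N.
have le_nqm : n%:R - m%:R <= q%:R * m%:R :> R.
  rewrite lerBlDr -natrM -natrD ler_nat.
  by rewrite {1}(divn_eq n m) leq_add2l ltnW // ltn_pmod.
have le_qf : f m *+ q <= f n.
  by apply: le_trans (superadd_mulrn _ _) (superadd_homo _); rewrite leq_trunc_div.
have -> : ratio m - f m / n%:R = f m * ((n%:R - m%:R) / m%:R) / n%:R.
  by rewrite /ratio; field; rewrite !lt0r_neq0.
rewrite ler_pM2r ?invr_gt0 //; apply: le_trans le_qf.
by rewrite -[f m *+ q]mulr_natr; apply: (ler_wpM2l (f_ge0 m)); rewrite ler_pdivrMr.
Qed.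

Lemma superadd_ratio_near_lb m eps : 0 < eps -> \forall n \near \oo, ratio m - eps < ratio n.
Proof.
move=> eps_gt0; have [->|m_gt0] := posnP m.
  by near=> n; rewrite /ratio invr0 mulr0 sub0r (lt_le_trans _ (divr_ge0 _ _)) ?oppr_lt0.
near=> n.
have le_mn : (m <= n)%N by near: n; exact: nbhs_infty_ge.
have lt_fn : f m / eps < n%:R by near: n; exact: nbhs_infty_gtr.
have n_pos : 0 < n%:R :> R by rewrite ltr0n (leq_trans m_gt0).
apply: lt_le_trans (superadd_ratio_lb (m := m) (n := n) _); last by rewrite m_gt0.
by rewrite ltrD2l ltrN2 ltr_pdivrMr // mulrC -ltr_pdivrMr.
Unshelve. all: end_near.
Qed.

Lemma fekete_cvg : has_ubound (range ratio) -> ratio @ \oo --> sup (range ratio).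
Proof.
move=> ub; have sup_ratio : has_sup (range ratio) by split=> //; exists (ratio 0), 0%N.
apply/cvgrPdist_lt => eps eps_gt0.
have eps2_gt0 : 0 < eps / 2 by rewrite divr_gt0.
have [_ [m _ <-] lt_m] := sup_adherent eps2_gt0 sup_ratio.
near=> n.
have lb : ratio m - eps / 2 < ratio n by near: n; exact: superadd_ratio_near_lb.
have ub_n : ratio n <= sup (range ratio) by apply: sup_upper_bound => //; exists n.
rewrite ger0_norm ?subr_ge0 //; lra.
Unshelve. all: end_near.
Qed.

Lemma fekete_cvgy : ~ has_ubound (range ratio) -> ratio @ \oo --> +oo.
Proof.
move=> not_ub; apply/cvgryPge => A.
have [m A1_lt] : exists m, A + 1 < ratio m.
  apply: boolp.contrapT => no_m; apply: not_ub; exists (A + 1) => _ [m _ <-].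
  by rewrite leNgt; apply/negP => lt_m; apply: no_m; exists m.
near=> n.
have lb : ratio m - 1 < ratio n by near: n; exact: superadd_ratio_near_lb.
lra.
Unshelve. all: end_near.
Qed.

End Fekete.

Lemma ramsey_crit0 k : ramsey_crit 0 k = 0%N.
Proof.
have : (ramsey [::] <= 1)%N by apply: ramsey_min => c /(_ 0 0 isT isT).
by rewrite /ramsey_crit /ramsey_diag /=; case: ramsey => [|[]].
Qed.

Lemma ramsey_diagE r k : (3 <= k)%N -> (0 < r)%N ->
  ramsey_diag r k = (ramsey_crit r k).+1.
Proof.
move=> k_ge3 r_gt0; have := ramsey_crit_gt0 k_ge3 r_gt0.
by rewrite /ramsey_crit; case: (ramsey_diag r k).
Qed.

Section RamseyRate.
Variable R : realType.

Definition ramsey_rate k r : R := ln (ramsey_crit r k)%:R / r%:R.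

Lemma ln_nat_ge0 n : 0 <= ln (n%:R : R).
Proof. by case: n => [|n]; [rewrite ln0 | rewrite ln_ge0 // ler1n]. Qed.

Lemma ln_ramsey_crit_superadd k m n : (3 <= k)%N ->
  ln (ramsey_crit m k)%:R + ln (ramsey_crit n k)%:R <= ln (ramsey_crit (m + n) k)%:R :> R.
Proof.
move=> k_ge3; have [->|m_gt0] := posnP m; first by rewrite ramsey_crit0 (ln0 (lexx 0)) add0r.
have [->|n_gt0] := posnP n; first by rewrite ramsey_crit0 (ln0 (lexx 0)) addr0 addn0.
have crit_pos j : (0 < j)%N -> ((ramsey_crit j k)%:R : R) \is Num.pos.
  by move=> j_gt0; rewrite posrE ltr0n ramsey_crit_gt0.
rewrite -lnM ?crit_pos // ler_ln ?rpredM ?crit_pos ?addn_gt0 ?m_gt0 //.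
by rewrite -natrM ler_nat ramsey_crit_mul.
Qed.

Lemma ramsey_rate_cvg k : (3 <= k)%N -> has_ubound (range (ramsey_rate k)) ->
  ramsey_rate k @ \oo --> sup (range (ramsey_rate k)).
Proof.
move=> k_ge3; apply: fekete_cvg => [n|m n].
  exact: ln_nat_ge0.
exact: ln_ramsey_crit_superadd.
Qed.

Lemma ramsey_rate_cvgy k : (3 <= k)%N -> ~ has_ubound (range (ramsey_rate k)) ->
  ramsey_rate k @ \oo --> +oo.
Proof.
move=> k_ge3; apply: fekete_cvgy => [n|m n].
  exact: ln_nat_ge0.
exact: ln_ramsey_crit_superadd.
Qed.

Lemma ramsey_diag_root r k : (3 <= k)%N ->
  (ramsey_diag r k)%:R `^ r%:R^-1 = expR (ln (ramsey_diag r k)%:R / r%:R) :> R.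
Proof.
move=> k_ge3; case: r => [|r]; first by rewrite invr0 mulr0 powRr0 expR0.
by rewrite /powR ramsey_diagE // pnatr_eq0 mulrC.
Qed.

Lemma ln_ramsey_diag_bounds r k : (3 <= k)%N ->
  ramsey_rate k r <= ln (ramsey_diag r k)%:R / r%:R <= ramsey_rate k r + ln 2 / r%:R.
Proof.
rewrite /ramsey_rate => k_ge3; have [->|r_gt0] := posnP r.
  by rewrite !invr0 !mulr0 addr0 lexx.
have r_pos : 0 < r%:R^-1 :> R by rewrite invr_gt0 ltr0n.
set c : R := (ramsey_crit r k)%:R.
have c_ge1 : 1 <= c by rewrite ler1n ramsey_crit_gt0.
have c_pos : 0 < c by rewrite (lt_le_trans ltr01).
rewrite ramsey_diagE // -addn1 natrD -/c -mulrDl !ler_pM2r // -lnM ?posrE //.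
by rewrite !ler_ln ?posrE ?addr_gt0 ?mulr_gt0 // lerDl ler01 /= mulrDr mulr1 lerD2l.
Qed.

Lemma cvg_div_nat (c : R) : (fun r : nat => c / r%:R) @ \oo --> 0.
Proof.
rewrite -(mulr0 c); apply: cvgMr; apply/gtr0_cvgV0; last exact: cvgr_idn.
by near=> r; rewrite ltr0n; near: r; exact: nbhs_infty_gt.
Unshelve. all: end_near.
Qed.

Lemma Lk_expR k : (3 <= k)%N ->
  Lk R k = limn (fun r => (expR (ln (ramsey_diag r k)%:R / r%:R))%:E).
Proof.
by move=> k_ge3; congr (limn _); apply/boolp.funext => r; rewrite ramsey_diag_root.
Qed.

Lemma Lk_ubound k : (3 <= k)%N -> has_ubound (range (ramsey_rate k)) ->
  Lk R k = (expR (sup (range (ramsey_rate k))))%:E.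
Proof.
move=> k_ge3 ub.
have y_cvg : (fun r => ln (ramsey_diag r k)%:R / r%:R) @ \oo --> sup (range (ramsey_rate k)).
  apply: (squeeze_cvgr _ (ramsey_rate_cvg k_ge3 ub)).
    by near=> r; exact: ln_ramsey_diag_bounds.
  rewrite -[sup _]addr0; apply: cvgD; [exact: ramsey_rate_cvg | exact: cvg_div_nat].
have expR_cvg : (fun r => expR (ln (ramsey_diag r k)%:R / r%:R)) @ \oo -->
                 expR (sup (range (ramsey_rate k))).
  by apply: cvg_comp y_cvg _; exact: continuous_expR.
by rewrite Lk_expR // EFin_lim ?(cvg_lim _ expR_cvg).
Unshelve. all: end_near.
Qed.

Lemma Lk_unbounded k : (3 <= k)%N -> ~ has_ubound (range (ramsey_rate k)) ->
  Lk R k = +oo%E.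
Proof.
move=> k_ge3 not_ub; rewrite Lk_expR //; apply/cvg_lim/cvgeryP => //.
apply: (@ger_cvgy _ _ _ _ (ramsey_rate k)); last exact: ramsey_rate_cvgy.
near=> r; have /andP[le_rate _] := ln_ramsey_diag_bounds r k_ge3.
by rewrite (le_trans le_rate) // (le_trans _ (expR_ge1Dx _)) // lerDr.
Unshelve. all: end_near.
Qed.

End RamseyRate.

Section RateComparison.
Variables (R : realType) (dc : DC).

Lemma ramsey_rate_ge0 k r : 0 <= ramsey_rate R k r.
Proof. by rewrite divr_ge0 ?ln_nat_ge0. Qed.

Lemma ramsey_rate_ge3 k r : (3 <= k)%N -> ramsey_rate R 3 r <= ramsey_rate R k r.
Proof.
move=> k_ge3; have [->|r_gt0] := posnP r; first by rewrite /ramsey_rate !invr0 !mulr0.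
rewrite ler_pM2r ?invr_gt0 ?ltr0n // ler_ln ?posrE ?ltr0n ?ramsey_crit_gt0 //.
by rewrite ler_nat ramsey_crit_homo.
Qed.

Lemma ramsey_rate_le3 k r : (3 <= k)%N ->
  ramsey_rate R k r <= (k - 2)%:R * ramsey_rate R 3 (r * (k - 2)).
Proof.
move=> k_ge3; have [->|r_gt0] := posnP r; first by rewrite /ramsey_rate mul0n !invr0 !mulr0.
have k2_gt0 : (0 < k - 2)%N by rewrite subn_gt0.
have rk_gt0 : (0 < r * (k - 2))%N by rewrite muln_gt0 r_gt0.
have -> : (k - 2)%:R * ramsey_rate R 3 (r * (k - 2)) =
          ln (ramsey_crit (r * (k - 2)) 3)%:R / r%:R.
  have K0 : (k - 2)%:R != 0 :> R by rewrite pnatr_eq0 -lt0n.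
  have r0 : r%:R != 0 :> R by rewrite pnatr_eq0 -lt0n.
  by rewrite /ramsey_rate natrM invfM mulrCA [X in _ * X]mulrCA divff ?mulr1.
rewrite /ramsey_rate ler_pM2r ?invr_gt0 ?ltr0n // ler_ln ?posrE ?ltr0n ?ramsey_crit_gt0 //.
by rewrite ler_nat ramsey_crit_le3.
Qed.

Lemma ramsey_rate_ubound_iff k : (3 <= k)%N ->
  has_ubound (range (ramsey_rate R k)) <-> has_ubound (range (ramsey_rate R 3)).
Proof.
move=> k_ge3; split=> -[M ub_M].
  by exists M => _ [r _ <-]; rewrite (le_trans (ramsey_rate_ge3 _ k_ge3)) ?ub_M.
exists ((k - 2)%:R * M) => _ [r _ <-]; rewrite (le_trans (ramsey_rate_le3 _ k_ge3)) //.
by rewrite ler_wpM2l ?ub_M.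
Qed.

Lemma ramsey_rate_succ k q : (3 <= k)%N -> (0 < q)%N ->
  ramsey_rate R k q + ln 2 / (k - 1)%:R <= ramsey_rate R k.+1 ((k - 1) * q).
Proof.
move=> k_ge3 q_gt0.
have k1_gt0 : (0 < k - 1)%N by rewrite subn_gt0 ltnW.
have kq_gt0 : (0 < (k - 1) * q)%N by rewrite muln_gt0 k1_gt0.
set c := ramsey_crit q k; set C := ramsey_crit ((k - 1) * q) k.+1.
have c_pos : 0 < c%:R :> R by rewrite ltr0n ramsey_crit_gt0.
have C_pos : 0 < C%:R :> R by rewrite ltr0n ramsey_crit_gt0 // ltnW.
have ln_succ : ln c%:R * (k - 1)%:R + ln 2 * q%:R <= ln C%:R :> R.
  rewrite !mulr_natr -!lnXn // -lnM ?posrE ?exprn_gt0 //.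
  rewrite ler_ln ?posrE ?mulr_gt0 ?exprn_gt0 //.
  by rewrite -natrX -(natrX _ 2) -natrM ler_nat ramsey_crit_succ.
have -> : ramsey_rate R k q + ln 2 / (k - 1)%:R =
          (ln c%:R * (k - 1)%:R + ln 2 * q%:R) / ((k - 1) * q)%:R.
  have K0 : (k - 1)%:R != 0 :> R by rewrite pnatr_eq0 -lt0n.
  have Q0 : q%:R != 0 :> R by rewrite pnatr_eq0 -lt0n.
  by rewrite /ramsey_rate addf_div // natrM [(k - 1)%:R * _]mulrC.
by rewrite /ramsey_rate ler_pM2r ?invr_gt0 ?ltr0n.
Qed.

Lemma sup_ramsey_rate_succ k : (3 <= k)%N -> has_ubound (range (ramsey_rate R k.+1)) ->
  sup (range (ramsey_rate R k)) + ln 2 / (k - 1)%:R <= sup (range (ramsey_rate R k.+1)).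
Proof.
move=> k_ge3 ub; rewrite -lerBrDr.
have step q : (0 < q)%N ->
    ramsey_rate R k q <= sup (range (ramsey_rate R k.+1)) - ln 2 / (k - 1)%:R.
  move=> q_gt0; rewrite lerBrDr (le_trans (ramsey_rate_succ k_ge3 q_gt0)) //.
  by apply: ub_le_sup => //; exists ((k - 1) * q)%N.
apply: ge_sup; first by exists (ramsey_rate R k 1), 1%N.
move=> _ [[|q] _ <-]; last exact: step.
by rewrite (le_trans _ (step 1%N isT)) // /ramsey_rate invr0 mulr0 ramsey_rate_ge0.
Qed.

End RateComparison.

Local Open Scope ereal_scope.

Theorem corollary4 (R : realType) :
  DC ->
  ((forall k : nat, (3 <= k)%N -> Lk R k \is a fin_num) \/
   (forall k : nat, (3 <= k)%N -> Lk R k = +oo)) /\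
  (Lk R 3 \is a fin_num -> forall k : nat, (3 <= k)%N -> Lk R k < Lk R k.+1).
Proof.
move=> dc; have ub_iff := ramsey_rate_ubound_iff R dc.
have [ub3|not_ub3] := boolp.pselect (has_ubound (range (ramsey_rate R 3))); last first.
  split; last by rewrite (Lk_unbounded (leqnn 3) not_ub3); case.
  by right=> k k_ge3; apply: (Lk_unbounded k_ge3); rewrite (ub_iff k k_ge3).
have ub k : (3 <= k)%N -> has_ubound (range (ramsey_rate R k)).
  by move=> k_ge3; rewrite (ub_iff k k_ge3).
split=> [|_ k k_ge3]; first by left=> k k_ge3; rewrite (Lk_ubound k_ge3 (ub k k_ge3)).
have k1_ge3 := leqW k_ge3.
rewrite (Lk_ubound k_ge3 (ub k k_ge3)) (Lk_ubound k1_ge3 (ub k.+1 k1_ge3)) lte_fin ltr_expR.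
apply: lt_le_trans (sup_ramsey_rate_succ dc k_ge3 (ub k.+1 k1_ge3)).
by rewrite ltrDl divr_gt0 ?ln_gt0 ?ltr1n ?ltr0n ?subn_gt0 // ltnW.
Qed.
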